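(* Let $\mathbb{K}\in\{\mathbb{R},\mathbb{C}\}$, $\star\in\{*,T\}$, $\epsilon_1,\epsilon_2\in\{1,-1\}$, and let $Q(\lambda)=\lambda^2M+\lambda D+K\in\mathbb{K}^{n\times n}[\lambda]$ satisfy $M^\star=\epsilon_1M$, $D^\star=\epsilon_2D$, $K^\star=\epsilon_1K$. Suppose $(X_c,\Lambda_c)\in\mathbb{K}^{n\times p_1}\times\mathbb{K}^{p_1\times p_1}$ and $(X_f,\Lambda_f)\in\mathbb{K}^{n\times p_2}\times\mathbb{K}^{p_2\times p_2}$ are invariant pairs of $Q(\lambda)$. Let $\Lambda_a\in\mathbb{K}^{p_1\times p_1}$ and put $S=X_c^\star MX_c\Lambda_c+\epsilon_1\epsilon_2\Lambda_c^\star X_c^\star MX_c+X_c^\star DX_c$. Assume that (1) $\sigma(\Lambda_c)\cap\sigma(\epsilon_1\epsilon_2\Lambda_f^\star)=\emptyset$, and (2) $R:=X_c^\star MX_c\Lambda_a+\epsilon_1\epsilon_2\Lambda_c^\star X_c^\star MX_c+X_c^\star DX_c$ is nonsingular. Let $Z=(\Lambda_c-\Lambda_a)R^{-1}$ and $\triangle M=MX_cZX_c^\star M$, $\triangle D=\epsilon_1\epsilon_2MX_cZ\Lambda_c^\star X_c^\star M+MX_cZX_c^\star D+MX_c\Lambda_cZX_c^\star M+DX_cZX_c^\star M$, $\triangle K=\epsilon_1\epsilon_2MX_c\Lambda_cZ\Lambda_c^\star X_c^\star M+MX_c\Lambda_cZX_c^\star D+\epsilon_1\epsilon_2DX_cZ\Lambda_c^\star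 X_c^\star M+DX_cZX_c^\star D$. Then $(X_c,\Lambda_a)$ and $(X_f,\Lambda_f)$ are invariant pairs of $Q_\triangle(\lambda)=\lambda^2(M+\triangle M)+\lambda(D+\triangle D)+(K+\triangle K)\in\mathbb{K}^{n\times n}[\lambda]$. Moreover, if $S\Lambda_a=\epsilon_1(S\Lambda_a)^\star$, then $(M+\triangle M)^\star=\epsilon_1(M+\triangle M)$, $(D+\triangle D)^\star=\epsilon_2(D+\triangle D)$ and $(K+\triangle K)^\star=\epsilon_1(K+\triangle K)$.
   Context: For a matrix $A$, $A^*$ is the conjugate transpose and $A^T$ the transpose; $A^\star$ means $A^*$ if $\star=*$ and $A^T$ if $\star=T$. $\sigma(A)$ is the spectrum of a square matrix $A$. A pair $(X,\Lambda)\in\mathbb{K}^{n\times p}\times\mathbb{K}^{p\times p}$ is an invariant pair of $Q(\lambda)=\lambda^2M+\lambda D+K$ if $Q(X,\Lambda):=MX\Lambda^2+DX\Lambda+KX=0$. *)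

From HB Require Import structures.
From mathcomp Require Import all_boot all_order all_algebra.
From mathcomp Require Import reals.
From mathcomp.real_closed Require Import complex.
Set Implicit Arguments. Unset Strict Implicit. Unset Printing Implicit Defensive.
Import Order.TTheory GRing.Theory Num.Theory.
Local Open Scope ring_scope.

Inductive star_kind := StarConj | StarTr.

Definition mxstar (F : fieldType) (conj : F -> F) (s : star_kind) (m n : nat)
  (A : 'M[F]_(m, n)) : 'M[F]_(n, m) :=
  match s with StarConj => map_mx conj A^T | StarTr => A^T end.

Definition invariant_pair (F : fieldType) (n p : nat) (M D K : 'M[F]_n)
  (X : 'M[F]_(n, p)) (L : 'M[F]_p) : Prop :=
  M *m X *m (L *m L) + D *m X *m L + K *m X = 0.

Definition spec_disjointC (R : rcfType) (p q : nat) (A : 'M[R[i]]_p) (B : 'M[R[i]]_q) :=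
  forall z : R[i], ~ (eigenvalue A z /\ eigenvalue B z).

(* for real matrices, sigma(A) is the set of complex eigenvalues *)
Definition spec_disjointR (R : rcfType) (p q : nat) (A : 'M[R]_p) (B : 'M[R]_q) :=
  spec_disjointC (map_mx (fun x : R => real_complex R x) A) (map_mx (fun x : R => real_complex R x) B).

Definition theorem3p6_over (F : fieldType) (conj : F -> F)
  (sdisj : forall p q : nat, 'M[F]_p -> 'M[F]_q -> Prop) : Prop :=
  forall (s : star_kind) (e1 e2 : F) (n p1 p2 : nat)
    (M D K : 'M[F]_n) (Xc : 'M[F]_(n, p1)) (Lc La : 'M[F]_p1)
    (Xf : 'M[F]_(n, p2)) (Lf : 'M[F]_p2),
  let st m k (A : 'M[F]_(m, k)) := mxstar conj s A in
  (e1 = 1 \/ e1 = -1) -> (e2 = 1 \/ e2 = -1) ->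
  st _ _ M = e1 *: M -> st _ _ D = e2 *: D -> st _ _ K = e1 *: K ->
  invariant_pair M D K Xc Lc -> invariant_pair M D K Xf Lf ->
  let S := st _ _ Xc *m M *m Xc *m Lc + (e1 * e2) *: (st _ _ Lc *m st _ _ Xc *m M *m Xc)
           + st _ _ Xc *m D *m Xc in
  let Rm := st _ _ Xc *m M *m Xc *m La + (e1 * e2) *: (st _ _ Lc *m st _ _ Xc *m M *m Xc)
           + st _ _ Xc *m D *m Xc in
  sdisj p1 p2 Lc ((e1 * e2) *: st _ _ Lf) ->
  Rm \in unitmx ->
  let Z := (Lc - La) *m invmx Rm in
  let dM := M *m Xc *m Z *m st _ _ Xc *m M in
  let dD := (e1 * e2) *: (M *m Xc *m Z *m st _ _ Lc *m st _ _ Xc *m M)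
            + M *m Xc *m Z *m st _ _ Xc *m D
            + M *m Xc *m Lc *m Z *m st _ _ Xc *m M
            + D *m Xc *m Z *m st _ _ Xc *m M in
  let dK := (e1 * e2) *: (M *m Xc *m Lc *m Z *m st _ _ Lc *m st _ _ Xc *m M)
            + M *m Xc *m Lc *m Z *m st _ _ Xc *m D
            + (e1 * e2) *: (D *m Xc *m Z *m st _ _ Lc *m st _ _ Xc *m M)
            + D *m Xc *m Z *m st _ _ Xc *m D in
  [/\ invariant_pair (M + dM) (D + dD) (K + dK) Xc La,
      invariant_pair (M + dM) (D + dD) (K + dK) Xf Lf &
      S *m La = e1 *: st _ _ (S *m La) ->
        [/\ st _ _ (M + dM) = e1 *: (M + dM),
            st _ _ (D + dD) = e2 *: (D + dD) &
            st _ _ (K + dK) = e1 *: (K + dK)]].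

From HB Require Import structures.
From mathcomp Require Import all_boot all_order all_algebra.
From mathcomp Require Import reals.
From mathcomp.real_closed Require Import complex.

Set Implicit Arguments.
Unset Strict Implicit.
Unset Printing Implicit Defensive.

Import GRing.Theory.
Local Open Scope ring_scope.

(* Put W(X, L) = Xc^* M X L + e1 e2 Lc^* Xc^* M X + Xc^* D X.  Expanding, the
   residual of Q_triangle at any pair (X, L) is the residual of Q at (X, L)
   plus M Xc Z W L + (M Xc Lc + D Xc) Z W.  If (X, L) is invariant for Q, the
   symmetries of M, D, K and the invariance of (Xc, Lc) give the Sylvester
   equation W L = e1 e2 Lc^* W, so W(Xf, Lf) = 0 by the spectral hypothesis;
   and W(Xc, La) = R with Z R = Lc - La, so the extra terms turn the residual
   at (Xc, La) into the residual at (Xc, Lc).  For the structure, the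
   hypothesis on S La gives (Lc - La)^* R = e1 R^* (Lc - La), i.e. Z^* = e1 Z,
   and then every perturbation term is mapped to plus or minus itself. *)

(* Closes an equation between two sums of the same summands in any order. *)
Ltac addr_perm :=
  rewrite ?addrA;
  repeat match goal with
  | |- ?l + ?x = ?r =>
      (try rewrite [in RHS](addrC x)); (repeat rewrite [in RHS](addrAC _ x));
      apply: (congr1 (+%R^~ x))
  end; reflexivity.

Ltac mx_expand :=
  do ?progress rewrite ?(mulmxDl, mulmxDr, mulmxBl, mulmxBr, mulNmx, mulmxN,
    opprD, scalerDr, scalerBr, scalerN, scalerA, mulmxA) -?scalemxAl -?scalemxAr.

Definition quad_residual (F : fieldType) (n p : nat) (M D K : 'M[F]_n)
    (X : 'M[F]_(n, p)) (L : 'M[F]_p) : 'M[F]_(n, p) :=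
  M *m X *m (L *m L) + D *m X *m L + K *m X.

Section Perturbation.

Variables (F : fieldType) (ep : F) (n p1 : nat).
Variables (M D K : 'M[F]_n) (Xc : 'M[F]_(n, p1)) (Lc : 'M[F]_p1).
(* [Xs] and [Ls] play the roles of Xc^star and Lc^star. *)
Variables (Xs : 'M[F]_(p1, n)) (Ls : 'M[F]_p1).

Definition cross_term p (X : 'M[F]_(n, p)) (L : 'M[F]_p) : 'M[F]_(p1, p) :=
  Xs *m M *m X *m L + ep *: (Ls *m Xs *m M *m X) + Xs *m D *m X.

Definition deltaM (Z : 'M[F]_p1) : 'M[F]_n := M *m Xc *m Z *m Xs *m M.

Definition deltaD (Z : 'M[F]_p1) : 'M[F]_n :=
  ep *: (M *m Xc *m Z *m Ls *m Xs *m M) + M *m Xc *m Z *m Xs *m D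
  + M *m Xc *m Lc *m Z *m Xs *m M + D *m Xc *m Z *m Xs *m M.

Definition deltaK (Z : 'M[F]_p1) : 'M[F]_n :=
  ep *: (M *m Xc *m Lc *m Z *m Ls *m Xs *m M) + M *m Xc *m Lc *m Z *m Xs *m D
  + ep *: (D *m Xc *m Z *m Ls *m Xs *m M) + D *m Xc *m Z *m Xs *m D.

Lemma quad_residual_delta Z p (X : 'M[F]_(n, p)) (L : 'M[F]_p) :
  quad_residual (M + deltaM Z) (D + deltaD Z) (K + deltaK Z) X L =
  quad_residual M D K X L + M *m Xc *m (Z *m cross_term X L) *m L
  + (M *m Xc *m Lc + D *m Xc) *m (Z *m cross_term X L).
Proof. rewrite /quad_residual /deltaM /deltaD /deltaK /cross_term; mx_expand; addr_perm. Qed.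

Lemma invariant_pair_delta Z p (X : 'M[F]_(n, p)) (L : 'M[F]_p) :
  invariant_pair M D K X L -> Z *m cross_term X L = 0 ->
  invariant_pair (M + deltaM Z) (D + deltaD Z) (K + deltaK Z) X L.
Proof.
move=> inv_XL ZW0; change (quad_residual (M + deltaM Z) (D + deltaD Z) (K + deltaK Z) X L = 0).
by rewrite quad_residual_delta ZW0 !mulmx0 mul0mx !addr0; apply: inv_XL.
Qed.

Lemma invariant_pair_delta_shift Z (La : 'M[F]_p1) :
  invariant_pair M D K Xc Lc -> Z *m cross_term Xc La = Lc - La ->
  invariant_pair (M + deltaM Z) (D + deltaD Z) (K + deltaK Z) Xc La.
Proof.
move=> inv_c ZW; change (quad_residual (M + deltaM Z) (D + deltaD Z) (K + deltaK Z) Xc La = 0).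
rewrite quad_residual_delta ZW -[RHS]inv_c /quad_residual.
set Y := Lc - La; rewrite -(subrK La Lc) -/Y; clearbody Y.
mx_expand; addr_perm.
Qed.

Lemma cross_term_shift p (X : 'M[F]_(n, p)) (L L' : 'M[F]_p) :
  cross_term X L = cross_term X L' + Xs *m M *m X *m (L - L').
Proof. rewrite /cross_term -{1}(subrK L' L); move: (L - L') => Y; mx_expand; addr_perm. Qed.

End Perturbation.

Lemma sign_mulss (F : ringType) (e : F) : e = 1 \/ e = -1 -> e * e = 1.
Proof. by case=> ->; rewrite ?mulr1 ?mulrNN ?mulr1. Qed.

Section Star.

Variables (F : fieldType) (conj : {rmorphism F -> F}) (s : star_kind).
Hypothesis conjK : involutive conj.
Local Notation st := (mxstar conj s).

Lemma conj_sign e : e = 1 \/ e = -1 -> conj e = e.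
Proof. by case=> ->; rewrite ?rmorph1 ?rmorphN1. Qed.

Lemma mxstar0 m n : st (0 : 'M[F]_(m, n)) = 0.
Proof. by case: s => /=; rewrite trmx0 // map_mx0. Qed.

Lemma mxstar1 m : st (1%:M : 'M[F]_m) = 1%:M.
Proof. by case: s => /=; rewrite trmx1 // map_mx1. Qed.

Lemma mxstarD m n (A B : 'M[F]_(m, n)) : st (A + B) = st A + st B.
Proof. by case: s => /=; rewrite linearD //= map_mxD. Qed.

Lemma mxstarB m n (A B : 'M[F]_(m, n)) : st (A - B) = st A - st B.
Proof. by case: s => /=; rewrite linearB //= map_mxB. Qed.

Lemma mxstarZ m n a (A : 'M[F]_(m, n)) : conj a = a -> st (a *: A) = a *: st A.
Proof. by case: s => /= conj_a; rewrite linearZ //= map_mxZ conj_a. Qed.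

Lemma mxstarM m n p (A : 'M[F]_(m, n)) (B : 'M[F]_(n, p)) :
  st (A *m B) = st B *m st A.
Proof. by case: s => /=; rewrite trmx_mul // map_mxM. Qed.

Lemma mxstarK m n (A : 'M[F]_(m, n)) : st (st A) = A.
Proof.
case: s => /=; last by rewrite trmxK.
by rewrite map_trmx trmxK -map_mx_comp map_mx_id // => x /=; rewrite conjK.
Qed.

Lemma mxstar_mul_invmx p e (A R : 'M[F]_p) : conj e = e -> R \in unitmx ->
  st A *m R = e *: (st R *m A) -> st (A *m invmx R) = e *: (A *m invmx R).
Proof.
move=> conj_e R_unit AR.
have stRV : st (invmx R) *m st R = 1%:M by rewrite -mxstarM mulmxV // mxstar1.
rewrite mxstarM.
have -> : st (invmx R) *m st A = st (invmx R) *m (st A *m R) *m invmx R.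
  by rewrite -mulmxA mulmxK.
by rewrite AR -scalemxAr -scalemxAl mulmxA stRV mul1mx.
Qed.

End Star.

Section StructuredPerturbation.

Variables (F : fieldType) (conj : {rmorphism F -> F}) (s : star_kind).
Hypothesis conjK : involutive conj.
Local Notation st := (mxstar conj s).

Variables (e1 e2 : F).
Hypotheses (e1_sign : e1 = 1 \/ e1 = -1) (e2_sign : e2 = 1 \/ e2 = -1).
Variables (n p1 : nat) (M D K : 'M[F]_n) (Xc : 'M[F]_(n, p1)) (Lc : 'M[F]_p1).
Hypotheses (M_sym : st M = e1 *: M) (D_sym : st D = e2 *: D) (K_sym : st K = e1 *: K).
Hypothesis inv_c : invariant_pair M D K Xc Lc.

Local Notation ep := (e1 * e2).
Local Notation W := (cross_term ep M D (st Xc) (st Lc)).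
Local Notation dM := (deltaM M Xc (st Xc)).
Local Notation dD := (deltaD ep M D Xc Lc (st Xc) (st Lc)).
Local Notation dK := (deltaK ep M D Xc Lc (st Xc) (st Lc)).

Let conj_e1 : conj e1 = e1. Proof. exact: conj_sign. Qed.
Let conj_ep : conj ep = ep. Proof. by rewrite rmorphM conj_e1 conj_sign. Qed.
Let e1e1 : e1 * e1 = 1. Proof. exact: sign_mulss. Qed.
Let epep : ep * ep = 1. Proof. by rewrite mulrACA e1e1 sign_mulss ?mul1r. Qed.

Ltac sign_cases :=
  let E1 := fresh in let E2 := fresh in
  case: e1_sign => E1; case: e2_sign => E2; rewrite ?E1 ?E2; mx_expand;
  rewrite ?(mul1r, mulr1, mulN1r, mulrN1, opprK, scale1r, scaleN1r, scalerN);
  addr_perm.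

Lemma cross_term_sylvester p (X : 'M[F]_(n, p)) (L : 'M[F]_p) :
  invariant_pair M D K X L -> W X L *m L = ep *: (st Lc *m W X L).
Proof.
move=> inv_XL.
have split_residuals : W X L *m L + e1 *: (st (quad_residual M D K Xc Lc) *m X) =
    ep *: (st Lc *m W X L) + st Xc *m quad_residual M D K X L.
  rewrite /cross_term /quad_residual !mxstarD !mxstarM // K_sym D_sym M_sym; sign_cases.
by move: split_residuals; rewrite [quad_residual M D K X L]inv_XL [quad_residual _ _ _ Xc Lc]inv_c
  mxstar0 mul0mx mulmx0 scaler0 !addr0.
Qed.

Lemma cross_term_star : st (W Xc Lc) = e2 *: W Xc Lc.
Proof.
rewrite /cross_term !mxstarD // mxstarZ // !mxstarM // !mxstarK // M_sym D_sym.
sign_cases.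
Qed.

Lemma delta_mxstar Z : st Z = e1 *: Z ->
  [/\ st (M + dM Z) = e1 *: (M + dM Z), st (D + dD Z) = e2 *: (D + dD Z)
     & st (K + dK Z) = e1 *: (K + dK Z)].
Proof.
move=> Z_sym; rewrite /deltaM /deltaD /deltaK.
by split; rewrite !mxstarD ?mxstarZ // !mxstarM !mxstarK // ?K_sym ?D_sym M_sym Z_sym;
  sign_cases.
Qed.

Lemma delta_coef_mxstar La : W Xc La \in unitmx ->
  W Xc Lc *m La = e1 *: st (W Xc Lc *m La) ->
  st ((Lc - La) *m invmx (W Xc La)) = e1 *: ((Lc - La) *m invmx (W Xc La)).
Proof.
move=> R_unit SLa_sym; apply: mxstar_mul_invmx => //.
set S := W Xc Lc; set T := st Xc *m M *m Xc; set Y := Lc - La.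
have R_eq : W Xc La = S - T *m Y by rewrite [S](cross_term_shift _ _ _ _ _ _ _ La) addrK.
have T_sym : st T = e1 *: T by rewrite !mxstarM // mxstarK // M_sym; mx_expand.
have SLc : S *m Lc = ep *: (st Lc *m S) by exact: cross_term_sylvester.
have SLa : S *m La = ep *: (st La *m S).
  by rewrite {1}SLa_sym mxstarM // cross_term_star -scalemxAr scalerA.
have YS : st Y *m S = ep *: (S *m Y).
  by rewrite mxstarB mulmxBl mulmxBr scalerBr SLc SLa !scalerA epep !scale1r.
rewrite R_eq -/Y [st (S - _)]mxstarB mxstarM // T_sym cross_term_star.
rewrite mulmxBr mulmxA YS mulmxBl scalerBr -scalemxAl -scalemxAr -scalemxAl.
by rewrite !scalerA e1e1 scale1r.
Qed.

Lemma cross_term_eq0 p (X : 'M[F]_(n, p)) (L : 'M[F]_p) :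
  (forall Y : 'M[F]_(p, p1), (ep *: st L) *m Y = Y *m Lc -> Y = 0) ->
  invariant_pair M D K X L -> W X L = 0.
Proof.
move=> sylvester_uniq inv_XL.
rewrite -[W X L](mxstarK s conjK) (sylvester_uniq (st (W X L))) ?mxstar0 //.
rewrite -scalemxAl -mxstarM // cross_term_sylvester // mxstarZ // mxstarM // mxstarK //.
by rewrite scalerA epep scale1r.
Qed.

End StructuredPerturbation.

Lemma sylvester_eq0 (F : closedFieldType) p q (A : 'M[F]_p) (B : 'M[F]_q) (Y : 'M[F]_(q, p)) :
  (forall z, ~ (eigenvalue A z /\ eigenvalue B z)) -> B *m Y = Y *m A -> Y = 0.
Proof.
case: p A Y => [|p] A Y disjAB BY_YA; first by rewrite thinmx0.
case: q B Y disjAB BY_YA => [|q] B Y disjAB BY_YA; first by rewrite flatmx0.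
have horner_comm (r : {poly F}) : horner_mx B r *m Y = Y *m horner_mx A r.
  elim/poly_ind: r => [|r c IHr]; first by rewrite !rmorph0 mul0mx mulmx0.
  rewrite !rmorphD !rmorphM /= !horner_mx_X !horner_mx_C mulmxDl mulmxDr.
  rewrite mul_scalar_mx mul_mx_scalar; congr (_ + _).
  by rewrite -[_ * B]/(_ *m B) -[_ * A]/(_ *m A) -mulmxA BY_YA !mulmxA IHr.
have coprime_char : coprimep (char_poly A) (char_poly B).
  rewrite coprimep_def; apply/negPn/negP => /closed_rootP[z].
  by rewrite root_gcd -!eigenvalue_root_char => /andP[Az Bz]; apply: (disjAB z).
case/Bezout_eq1_coprimepP: coprime_char => [[u v]] /= bezout.
have := congr1 (horner_mx B) bezout.
rewrite rmorphD !rmorphM /= Cayley_Hamilton mulr0 addr0 rmorph1 => uB.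
rewrite -[Y]mul1mx -[1%:M]/(1 : 'M_q.+1) -uB -[_ * _]/(_ *m _) -mulmxA horner_comm.
by rewrite Cayley_Hamilton !mulmx0.
Qed.

Lemma sylvester_eq0_real (R : rcfType) p q (A : 'M[R]_p) (B : 'M[R]_q) (Y : 'M[R]_(q, p)) :
  spec_disjointR A B -> B *m Y = Y *m A -> Y = 0.
Proof.
move=> disjAB /(congr1 (map_mx (real_complex R))); rewrite !map_mxM.
by move/(sylvester_eq0 disjAB)/eqP; rewrite map_mx_eq0 => /eqP.
Qed.

Lemma theorem3p6_over_sylvester (F : fieldType) (conj : {rmorphism F -> F})
    (sdisj : forall p q : nat, 'M[F]_p -> 'M[F]_q -> Prop) :
  involutive conj ->
  (forall p q (A : 'M[F]_p) (B : 'M[F]_q) Y, sdisj p q A B -> B *m Y = Y *m A -> Y = 0) ->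
  theorem3p6_over conj sdisj.
Proof.
move=> conjK sylvester_uniq s e1 e2 n p1 p2 M D K Xc Lc La Xf Lf st e1_sign e2_sign
  M_sym D_sym K_sym inv_c inv_f S R disj R_unit Z dM dD dK.
subst st S R Z dM dD dK.
split.
- by apply: invariant_pair_delta_shift => //; rewrite mulmxKV.
- apply: invariant_pair_delta => //.
  have Wf0 := cross_term_eq0 conjK e1_sign e2_sign M_sym D_sym K_sym inv_c _ inv_f.
  by rewrite Wf0 ?mulmx0 // => Y; apply: sylvester_uniq disj.
- move=> SLa_sym; apply: delta_mxstar => //.
  exact: (delta_coef_mxstar conjK e1_sign e2_sign M_sym D_sym K_sym inv_c R_unit SLa_sym).
Qed.

Theorem theorem3p6 (R : realType) :
  theorem3p6_over (@conjc R) (@spec_disjointC R)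
  /\ theorem3p6_over (fun x : R => x) (@spec_disjointR R).
Proof.
split.
- apply: (theorem3p6_over_sylvester (conj := (conjc : {rmorphism R[i] -> R[i]}))).
    exact: conjcK.
  by move=> p q A B Y; apply: sylvester_eq0.
- apply: (theorem3p6_over_sylvester (conj := (idfun : {rmorphism R -> R}))) => //.
  by move=> p q A B Y; apply: sylvester_eq0_real.
Qed.
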